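(* Let $A$ be a quasi-quantale and let $d$ be a multiplicative nucleus on $A$. Then the set of fixed points $A_d=\{a\in A\mid d(a)=a\}$ (with the order of $A$, joins $\bigvee^d X=d(\bigvee X)$ and meets as in $A$) is a meet-continuous lattice, i.e. $(\bigvee^d X)\wedge a=\bigvee^d\{x\wedge a\mid x\in X\}$ for every directed $X\subseteq A_d$ and every $a\in A_d$.
   Context: A quasi-quantale is a complete lattice $A$ equipped with an associative binary operation $(a,b)\mapsto ab$ such that for every directed subset $X\subseteq A$ (non-empty, and any two elements of $X$ have an upper bound in $X$) and every $a\in A$: $(\bigvee X)a=\bigvee\{xa\mid x\in X\}$ and $a(\bigvee X)=\bigvee\{ax\mid x\in X\}$. An inflator on $A$ is a monotone map $d\colon A\to A$ with $a\leq d(a)$ for all $a$. A multiplicative nucleus is an inflator $d$ with $d\circ d=d$, $d(a\wedge b)=d(a)\wedge d(b)$ and $d(ab)=d(a)\wedge d(b)$ for all $a,b\in A$. *)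

Definition subset_of (A : Type) := A -> Prop.

Definition is_ub {A : Type} (le : A -> A -> Prop) (X : A -> Prop) (x : A) : Prop :=
  forall y, X y -> le y x.

Definition is_lub {A : Type} (le : A -> A -> Prop) (X : A -> Prop) (x : A) : Prop :=
  is_ub le X x /\ forall z, is_ub le X z -> le x z.

Definition is_glb2 {A : Type} (le : A -> A -> Prop) (a b m : A) : Prop :=
  le m a /\ le m b /\ forall c, le c a -> le c b -> le c m.

Definition complete_lattice {A : Type} (le : A -> A -> Prop)
  (sup : (A -> Prop) -> A) (meet : A -> A -> A) : Prop :=
  (forall a, le a a) /\
  (forall a b c, le a b -> le b c -> le a c) /\
  (forall a b, le a b -> le b a -> a = b) /\
  (forall X, is_lub le X (sup X)) /\
  (forall a b, is_glb2 le a b (meet a b)).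

Definition directed {A : Type} (le : A -> A -> Prop) (X : A -> Prop) : Prop :=
  (exists x, X x) /\
  forall x y, X x -> X y -> exists z, X z /\ le x z /\ le y z.

Definition image {A : Type} (f : A -> A) (X : A -> Prop) : A -> Prop :=
  fun y => exists x, X x /\ y = f x.

Definition quasi_quantale {A : Type} (le : A -> A -> Prop)
  (sup : (A -> Prop) -> A) (meet : A -> A -> A) (mul : A -> A -> A) : Prop :=
  complete_lattice le sup meet /\
  (forall a b c, mul (mul a b) c = mul a (mul b c)) /\
  (forall X a, directed le X -> mul (sup X) a = sup (image (fun x => mul x a) X)) /\
  (forall X a, directed le X -> mul a (sup X) = sup (image (fun x => mul a x) X)).

Definition inflator {A : Type} (le : A -> A -> Prop) (d : A -> A) : Prop :=
  (forall a b, le a b -> le (d a) (d b)) /\ (forall a, le a (d a)).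

Definition multiplicative_nucleus {A : Type} (le : A -> A -> Prop)
  (meet : A -> A -> A) (mul : A -> A -> A) (d : A -> A) : Prop :=
  inflator le d /\
  (forall a, d (d a) = d a) /\
  (forall a b, d (meet a b) = meet (d a) (d b)) /\
  (forall a b, d (mul a b) = meet (d a) (d b)).

Definition fixpoints {A : Type} (d : A -> A) : A -> Prop := fun a => d a = a.


(* Since d(xy) = d x /\ d y, on fixed points the product x a becomes the meet
   x /\ a after closing.  For directed X, distributivity of the product over
   directed joins gives d(\/X) /\ a = d((\/X) a) = d(\/{x a | x in X}), and a
   closure operator does not distinguish \/{x a} from \/{d(x a)} = \/{x /\ a}. *)

Section ClosureOperator.

Context {A : Type} {le : A -> A -> Prop} {sup : (A -> Prop) -> A} {d : A -> A}.

Hypothesis le_trans : forall a b c, le a b -> le b c -> le a c.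
Hypothesis le_anti : forall a b, le a b -> le b a -> a = b.
Hypothesis sup_lub : forall X, is_lub le X (sup X).
Hypothesis d_mono : forall a b, le a b -> le (d a) (d b).
Hypothesis d_inflate : forall a, le a (d a).
Hypothesis d_idem : forall a, d (d a) = d a.

Lemma closure_sup_ub (X : A -> Prop) : is_ub le X (d (sup X)).
Proof.
  intros x Hx.
  apply le_trans with (sup X); [exact (proj1 (sup_lub X) x Hx) | apply d_inflate].
Qed.

Lemma closure_sup_least (X : A -> Prop) (z : A) :
  fixpoints d z -> is_ub le X z -> le (d (sup X)) z.
Proof.
  intros Hz Hub. rewrite <- Hz. apply d_mono, (proj2 (sup_lub X)), Hub.
Qed.

Lemma closure_sup_image_congr (f g : A -> A) (X : A -> Prop) :
  (forall x, X x -> d (f x) = g x) ->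
  d (sup (image f X)) = d (sup (image g X)).
Proof.
  intros Hfg. apply le_anti; apply closure_sup_least; try apply d_idem;
    intros y [x [Hx ->]].
  - apply le_trans with (d (f x)); [apply d_inflate |].
    rewrite Hfg by exact Hx. apply closure_sup_ub. exists x. split; [exact Hx | reflexivity].
  - rewrite <- Hfg by exact Hx.
    apply d_mono, (proj1 (sup_lub _)). exists x. split; [exact Hx | reflexivity].
Qed.

End ClosureOperator.

Section MultiplicativeNucleus.

Context {A : Type} {sup : (A -> Prop) -> A} {meet mul : A -> A -> A} {d : A -> A}.

Hypothesis d_meet : forall a b, d (meet a b) = meet (d a) (d b).
Hypothesis d_mul : forall a b, d (mul a b) = meet (d a) (d b).

Lemma fixpoints_meet (a b : A) :
  fixpoints d a -> fixpoints d b -> fixpoints d (meet a b).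
Proof. unfold fixpoints. intros Ha Hb. rewrite d_meet, Ha, Hb. reflexivity. Qed.

Lemma closure_mul_fixpoint_r (b a : A) :
  fixpoints d a -> d (mul b a) = meet (d b) a.
Proof. unfold fixpoints. intros Ha. rewrite d_mul, Ha. reflexivity. Qed.

End MultiplicativeNucleus.

Theorem proposition3p10 (A : Type) (le : A -> A -> Prop)
  (sup : (A -> Prop) -> A) (meet : A -> A -> A) (mul : A -> A -> A)
  (d : A -> A) :
  quasi_quantale le sup meet mul ->
  multiplicative_nucleus le meet mul d ->
  (* A_d is a lattice: joins d(\/X) are least upper bounds in A_d,
     meets computed in A stay in A_d and are glbs there *)
  (forall X : A -> Prop, (forall x, X x -> fixpoints d x) ->
     fixpoints d (d (sup X)) /\ is_ub le X (d (sup X)) /\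
     (forall z, fixpoints d z -> is_ub le X z -> le (d (sup X)) z)) /\
  (forall a b, fixpoints d a -> fixpoints d b -> fixpoints d (meet a b)) /\
  (* meet-continuity *)
  (forall (X : A -> Prop) (a : A),
     (forall x, X x -> fixpoints d x) -> directed le X -> fixpoints d a ->
     meet (d (sup X)) a = d (sup (image (fun x => meet x a) X))).
Proof.
  intros [[_ [le_trans [le_anti [sup_lub _]]]] [_ [distrR _]]]
         [[d_mono d_inflate] [d_idem [d_meet d_mul]]].
  split; [| split].
  - intros X _. split; [apply d_idem |]. split.
    + exact (closure_sup_ub le_trans sup_lub d_inflate X).
    + exact (closure_sup_least sup_lub d_mono X).
  - exact (fixpoints_meet d_meet).
  - intros X a HX Hdir Ha.
    rewrite <- (closure_mul_fixpoint_r d_mul (sup X) a Ha), (distrR X a Hdir).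
    apply (closure_sup_image_congr le_trans le_anti sup_lub d_mono d_inflate d_idem).
    intros x Hx. rewrite (closure_mul_fixpoint_r d_mul x a Ha), (HX x Hx). reflexivity.
Qed.
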